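(* For all $\alpha>0$, $\sigma^2>0$ and $\delta>0$, $$L\big(\psi_1(\alpha,\sigma^2);\delta\big)\le\psi_2(\alpha,\sigma^2;\delta).$$
   Context: For real $\alpha\ge0$, $\sigma^2\ge0$ with $(\alpha,\sigma^2)\ne(0,0)$: $\psi_1(\alpha,\sigma^2)=\int_0^{\pi/2}\frac{\alpha\sin^2\theta}{(\alpha^2\sin^2\theta+\sigma^2)^{1/2}}d\theta$ and $\psi_2(\alpha,\sigma^2;\delta)=\frac4\delta\big(\alpha^2+\sigma^2+1-\int_0^{\pi/2}\frac{2\alpha^2\sin^2\theta+\sigma^2}{(\alpha^2\sin^2\theta+\sigma^2)^{1/2}}d\theta\big)$. For $s\ge0$ let $\phi_1(s)=\int_0^{\pi/2}\frac{\sin^2\theta}{(\sin^2\theta+s^2)^{1/2}}d\theta$ (strictly decreasing, $\phi_1(0)=1$, $\phi_1(s)\to0$ as $s\to\infty$, with inverse $\phi_1^{-1}:(0,1]\to[0,\infty)$) and $\phi_2(s)=\int_0^{\pi/2}\frac{2\sin^2\theta+s^2}{(\sin^2\theta+s^2)^{1/2}}d\theta$. For $\alpha\in(0,1)$ and $\delta>0$ define $L(\alpha;\delta)=\frac4\delta\Big(1-\frac{\phi_2^2(\phi_1^{-1}(\alpha))}{4[1+(\phi_1^{-1}(\alpha))^2]}\Big)$. *)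

From Stdlib Require Import Reals ClassicalEpsilon.
Open Scope R_scope.

(* The Riemann integral of f over [a,b] as a total function: the value of
   RiemannInt for any integrability proof (the value is proof-independent,
   RiemannInt_P5); an arbitrary default if f is not Riemann integrable. *)
Definition Rint (f : R -> R) (a b : R) : R :=
  epsilon (inhabits 0)
    (fun I => exists pr : Riemann_integrable f a b, RiemannInt pr = I).

Definition psi1 (alpha s2 : R) : R :=
  Rint (fun t => alpha * (sin t)^2 / sqrt (alpha^2 * (sin t)^2 + s2)) 0 (PI/2).

Definition psi2 (alpha s2 delta : R) : R :=
  4 / delta * (alpha^2 + s2 + 1 -
    Rint (fun t => (2 * alpha^2 * (sin t)^2 + s2) / sqrt (alpha^2 * (sin t)^2 + s2))
      0 (PI/2)).

Definition phi1 (s : R) : R :=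
  Rint (fun t => (sin t)^2 / sqrt ((sin t)^2 + s^2)) 0 (PI/2).

Definition phi2 (s : R) : R :=
  Rint (fun t => (2 * (sin t)^2 + s^2) / sqrt ((sin t)^2 + s^2)) 0 (PI/2).

(* Inverse of phi1 on (0,1]: the s >= 0 with phi1 s = a
   (unique since phi1 is strictly decreasing on [0,oo)). *)
Definition phi1_inv (a : R) : R :=
  epsilon (inhabits 0) (fun s => 0 <= s /\ phi1 s = a).

Definition Lfun (alpha delta : R) : R :=
  let s := phi1_inv alpha in
  4 / delta * (1 - (phi2 s)^2 / (4 * (1 + s^2))).

(* Substituting s = sqrt(s2)/alpha, the integrands scale so that
   psi1 alpha s2 = phi1 s and psi2 alpha s2 delta = 4/delta (alpha^2 (1+s^2) + 1 - alpha phi2 s).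
   Since phi1 is strictly decreasing, phi1_inv (phi1 s) = s, and the claim reduces to
   alpha phi2 s <= alpha^2 (1+s^2) + phi2(s)^2 / (4 (1+s^2)), which is AM-GM. *)
From Stdlib Require Import Reals Lra ClassicalEpsilon FunctionalExtensionality.
From Coquelicot Require Import Coquelicot.
Open Scope R_scope.

Lemma Rint_RInt f a b :
  a <= b -> (forall x, a <= x <= b -> continuous f x) -> Rint f a b = RInt f a b.
Proof.
intros Hab Hf.
assert (Hex : ex_RInt f a b).
{ apply (ex_RInt_continuous (V := R_CompleteNormedModule)).
  rewrite Rmin_left, Rmax_right; auto. }
unfold Rint.
destruct (epsilon_spec (inhabits 0)
  (fun I => exists pr : Riemann_integrable f a b, RiemannInt pr = I)) as [pr <-].
- exists (RiemannInt (ex_RInt_Reals_0 _ _ _ Hex)), (ex_RInt_Reals_0 _ _ _ Hex).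
  reflexivity.
- symmetry; apply RInt_Reals.
Qed.

Lemma Rint_scal f a b k :
  a <= b -> (forall x, a <= x <= b -> continuous f x) ->
  Rint (fun t => k * f t) a b = k * Rint f a b.
Proof.
intros Hab Hf.
assert (Hex : ex_RInt f a b).
{ apply (ex_RInt_continuous (V := R_CompleteNormedModule)).
  rewrite Rmin_left, Rmax_right; auto. }
rewrite !Rint_RInt; auto.
- exact (RInt_scal (V := R_CompleteNormedModule) f a b k Hex).
- intros x Hx.
  apply (continuous_mult (K := R_AbsRing) (fun _ => k) f);
    [apply continuous_const | auto].
Qed.

Lemma sqrt_sqr_mult a x : 0 <= a -> sqrt (a ^ 2 * x) = a * sqrt x.
Proof.
intro Ha. rewrite sqrt_mult_alt by apply pow2_ge_0.
now rewrite sqrt_pow2.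
Qed.

Lemma sqrt_sin_sqr_add_pos s t : 0 < s -> 0 < sqrt (sin t ^ 2 + s ^ 2).
Proof. intro Hs. apply sqrt_lt_R0. nra. Qed.

Lemma continuous_phi2_integrand s x :
  0 < s -> continuous (fun t => (2 * sin t ^ 2 + s ^ 2) / sqrt (sin t ^ 2 + s ^ 2)) x.
Proof.
intro Hs.
apply (ex_derive_continuous (V := R_CompleteNormedModule)). auto_derive.
assert (0 < sin x * (sin x * 1) + s * (s * 1)) by nra.
split; [auto | split; [apply Rgt_not_eq, sqrt_lt_R0 | ]]; auto.
Qed.

Lemma sqr_div_sqrt_sqr x : x ^ 2 / sqrt (x ^ 2 + 0 ^ 2) = Rabs x.
Proof.
replace (x ^ 2 + 0 ^ 2) with (Rsqr x) by (unfold Rsqr; ring).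
rewrite sqrt_Rsqr_abs, <- pow2_abs.
destruct (Req_dec x 0) as [->|Hx].
- rewrite Rabs_R0. unfold Rdiv. ring.
- field. now apply Rabs_no_R0.
Qed.

(* At s = 0 the integrand is |sin t|, which is continuous but not differentiable. *)
Lemma continuous_phi1_integrand s x :
  0 <= s -> continuous (fun t => sin t ^ 2 / sqrt (sin t ^ 2 + s ^ 2)) x.
Proof.
intro Hs. destruct (Req_dec s 0) as [->|Hs0].
- apply (continuous_ext (fun t => Rabs (sin t))).
  + intro t. symmetry. apply sqr_div_sqrt_sqr.
  + apply continuous_Rabs_comp, continuous_sin.
- apply (ex_derive_continuous (V := R_CompleteNormedModule)). auto_derive.
  assert (0 < sin x * (sin x * 1) + s * (s * 1)) by nra.
  split; [auto | split; [apply Rgt_not_eq, sqrt_lt_R0 | ]]; auto.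
Qed.

Lemma phi1_decreasing u v : 0 <= u -> u < v -> phi1 v < phi1 u.
Proof.
intros Hu Huv. unfold phi1.
pose proof PI2_RGT_0.
rewrite !Rint_RInt; try lra;
  try (intros; apply continuous_phi1_integrand; lra).
apply RInt_lt; try lra; try (intros; apply continuous_phi1_integrand; lra).
intros t Ht.
assert (Hsin : 0 < sin t) by (apply sin_gt_0; lra).
assert (Hsqrt : 0 < sqrt (sin t ^ 2 + u ^ 2)) by (apply sqrt_lt_R0; nra).
assert (sqrt (sin t ^ 2 + u ^ 2) < sqrt (sin t ^ 2 + v ^ 2))
  by (apply sqrt_lt_1_alt; nra).
unfold Rdiv. apply Rmult_lt_compat_l; [nra | apply Rinv_lt_contravar; nra].
Qed.

Lemma phi1_inj u v : 0 <= u -> 0 <= v -> phi1 u = phi1 v -> u = v.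
Proof.
intros Hu Hv E.
destruct (Rtotal_order u v) as [H|[H|H]]; auto.
- pose proof (phi1_decreasing u v Hu H); lra.
- pose proof (phi1_decreasing v u Hv H); lra.
Qed.

Lemma phi1_invK s : 0 <= s -> phi1_inv (phi1 s) = s.
Proof.
intro Hs. unfold phi1_inv.
destruct (epsilon_spec (inhabits 0) (fun x => 0 <= x /\ phi1 x = phi1 s))
  as [Hx E].
- exists s; auto.
- now apply phi1_inj.
Qed.

Lemma psi1_scale alpha s :
  0 < alpha -> 0 < s -> psi1 alpha (alpha ^ 2 * s ^ 2) = phi1 s.
Proof.
intros Ha Hs. unfold psi1, phi1. f_equal.
apply functional_extensionality; intro t.
rewrite <- Rmult_plus_distr_l, sqrt_sqr_mult by (lra || nra).
pose proof (sqrt_sin_sqr_add_pos s t Hs).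
field; lra.
Qed.

Lemma psi2_scale alpha s delta :
  0 < alpha -> 0 < s ->
  psi2 alpha (alpha ^ 2 * s ^ 2) delta
  = 4 / delta * (alpha ^ 2 * (1 + s ^ 2) + 1 - alpha * phi2 s).
Proof.
intros Ha Hs. unfold psi2, phi2.
pose proof PI2_RGT_0.
rewrite <- Rint_scal by (lra || (intros; now apply continuous_phi2_integrand)).
replace (fun t => (2 * alpha ^ 2 * sin t ^ 2 + alpha ^ 2 * s ^ 2)
                  / sqrt (alpha ^ 2 * sin t ^ 2 + alpha ^ 2 * s ^ 2))
  with (fun t => alpha * ((2 * sin t ^ 2 + s ^ 2) / sqrt (sin t ^ 2 + s ^ 2))).
- f_equal. ring.
- apply functional_extensionality; intro t.
  rewrite <- Rmult_plus_distr_l, sqrt_sqr_mult by (lra || nra).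
  pose proof (sqrt_sin_sqr_add_pos s t Hs).
  field; lra.
Qed.

Lemma AM_GM_div a p c : 0 < c -> a * p <= c * a ^ 2 + p ^ 2 / (4 * c).
Proof.
intro Hc.
assert (0 <= (2 * c * a - p) ^ 2 / (4 * c))
  by (apply Rdiv_le_0_compat; [apply pow2_ge_0 | lra]).
replace (c * a ^ 2 + p ^ 2 / (4 * c))
  with (a * p + (2 * c * a - p) ^ 2 / (4 * c)) by (field; lra).
lra.
Qed.

Theorem mainTheorem13 (alpha s2 delta : R) :
  0 < alpha -> 0 < s2 -> 0 < delta ->
  Lfun (psi1 alpha s2) delta <= psi2 alpha s2 delta.
Proof.
intros Ha Hs2 Hd.
set (s := sqrt s2 / alpha).
assert (Hs : 0 < s) by (apply Rdiv_lt_0_compat; [apply sqrt_lt_R0 |]; lra).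
assert (Es2 : s2 = alpha ^ 2 * s ^ 2).
{ unfold s, Rdiv. rewrite Rpow_mult_distr, pow2_sqrt by lra. rewrite pow_inv. field. lra. }
rewrite Es2, psi1_scale, psi2_scale by auto.
unfold Lfun. rewrite phi1_invK by lra.
apply Rmult_le_compat_l; [apply Rlt_le, Rdiv_lt_0_compat; lra |].
pose proof (AM_GM_div alpha (phi2 s) (1 + s ^ 2) ltac:(nra)).
lra.
Qed.
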